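(* Let $n\in\mathbb{N}$, $\mathcal{H}=(\mathbb{C}^2)^{\otimes n}$ with computational basis $\{\lvert\bm b\rangle:\bm b\in\{0,1\}^n\}$, let $c:\{0,1\}^n\to\mathbb{R}$ and $\mathcal{S}\subseteq\{0,1\}^n$, let $C\in\mathcal{L}(\mathcal{H})$ be defined by $C\lvert\bm b\rangle=c(\bm b)\lvert\bm b\rangle$, let $\mathcal{H}_{\mathcal{S}}=\operatorname{span}\{\lvert\bm b\rangle:\bm b\in\mathcal{S}\}$ with orthogonal projection $P_{\mathcal{S}}$. Let $\lvert\iota\rangle\in\mathcal{H}_{\mathcal{S}}$ be a unit vector and let $U_1,\dots,U_\ell\in\mathcal{L}(\mathcal{H})$ be unitaries with $U_\ell=\mathbb{1}$ such that $\{U_j\lvert\iota\rangle:j=1,\dots,\ell\}$ is linearly independent. For $\bm\alpha\in\mathbb{C}^\ell$ put $M_{\bm\alpha}=\sum_{j=1}^\ell\alpha_jU_j$, and consider the problem \[ \min_{\bm\alpha\in\mathbb{C}^\ell}\ \langle\iota\rvert M_{\bm\alpha}^\dagger C M_{\bm\alpha}\lvert\iota\rangle\quad\text{s.t.}\quad \langle\iota\rvert M_{\bm\alpha}^\dagger M_{\bm\alpha}\lvert\iota\rangle=1,\quad \langle\iota\rvert M_{\bm\alpha}^\dagger(\mathbb{1}-P_{\mathcal{S}}) M_{\bm\alpha}\lvert\iota\rangle=0. \tag{P} \] Define $\mathbf F,\mathbf G,\mathbf H\in\mathbb{C}^{\ell\times\ell}$ by $\mathbf F_{jk}=\langle\iota\rvert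 U_j^\dagger U_k\lvert\iota\rangle$, $\mathbf G_{jk}=\langle\iota\rvert U_j^\dagger(\mathbb{1}-P_{\mathcal{S}})U_k\lvert\iota\rangle$, $\mathbf H_{jk}=\langle\iota\rvert U_j^\dagger C U_k\lvert\iota\rangle$, and the real symmetric $2\ell\times2\ell$ matrices \[ \bm F=\begin{pmatrix}\operatorname{Re}\mathbf F&-\operatorname{Im}\mathbf F\\ \operatorname{Im}\mathbf F&\operatorname{Re}\mathbf F\end{pmatrix},\ \bm G=\begin{pmatrix}\operatorname{Re}\mathbf G&-\operatorname{Im}\mathbf G\\ \operatorname{Im}\mathbf G&\operatorname{Re}\mathbf G\end{pmatrix},\ \bm H=\begin{pmatrix}\operatorname{Re}\mathbf H&-\operatorname{Im}\mathbf H\\ \operatorname{Im}\mathbf H&\operatorname{Re}\mathbf H\end{pmatrix}. \] Let $m=\dim\ker\bm G$ and let $\bm B_{\bm G}$ be a real orthogonal $2\ell\times2\ell$ matrix such that $\bm B_{\bm G}\bm G\bm B_{\bm G}^{-1}$ is diagonal with its first $m$ diagonal entries equal to $0$ (and the others nonzero). Let $\tilde{\bm F}$ and $\tilde{\bm H}$ be the upper-left $m\times m$ blocks of $\bm B_{\bm G}\bm F\bm B_{\bm G}^{-1}$ and $\bm B_{\bm G}\bm H\bm B_{\bm G}^{-1}$, respectively. Let $\lambda_0$ be the smallest generalized eigenvalue of the generalized eigenvalue problem $\tilde{\bm H}\bm x=\lambda\tilde{\bm F}\bm x$, $\bm x\in\mathbb{R}^m\setminus\{\bm 0\}$, and let $\bm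 x_0$ be an associated generalized eigenvector normalized so that $\bm x_0^{\top}\tilde{\bm F}\bm x_0=1$. Then the minimum of (P) equals $\lambda_0$, and a minimizer of (P) is \[ \bm\alpha_0=\big[\bm B_{\bm G}^{-1}(\bm x_0,0,\dots,0)\big]_{1,\dots,\ell}+i\,\big[\bm B_{\bm G}^{-1}(\bm x_0,0,\dots,0)\big]_{\ell+1,\dots,2\ell}, \] where $(\bm x_0,0,\dots,0)\in\mathbb{R}^{2\ell}$ is $\bm x_0$ padded with $2\ell-m$ zeros and $[\bm v]_{a,\dots,b}$ denotes the vector of entries $a$ through $b$ of $\bm v$.
   Context: $\mathcal{L}(\mathcal{H})$ denotes linear operators on $\mathcal{H}$; $\mathbb{1}$ is the identity. The data $(n,c,\mathcal{S})$ is a constrained combinatorial optimization problem with objective $c$ and feasible set $\mathcal{S}$. A generalized eigenvalue of the pair $(\tilde{\bm H},\tilde{\bm F})$ is a $\lambda\in\mathbb{R}$ for which there is a nonzero $\bm x$ with $\tilde{\bm H}\bm x=\lambda\tilde{\bm F}\bm x$. *)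

From HB Require Import structures.
From mathcomp Require Import all_boot all_order all_algebra.
From mathcomp Require Import complex.
Set Implicit Arguments. Unset Strict Implicit. Unset Printing Implicit Defensive.
Import Order.TTheory GRing.Theory Num.Theory.
Local Open Scope ring_scope.
Local Open Scope complex_scope.

Section Defs.
Variable R : rcfType.
Local Notation C := R[i].

Definition dag (m n : nat) (A : 'M[C]_(m, n)) : 'M[C]_(n, m) :=
  (map_mx (@conjc R) A)^T.

Definition unitary_mx (N : nat) (U : 'M[C]_N) : Prop :=
  dag U *m U = 1%:M /\ U *m dag U = 1%:M.

Definition orthogonal_mx (N : nat) (B : 'M[R]_N) : Prop :=
  B^T *m B = 1%:M /\ B *m B^T = 1%:M.

(* computational basis indexed by bit strings b in {0,1}^n = {ffun 'I_n -> bool};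
   the Hilbert space (C^2)^{(x) n} is C^#|bits n|  (#|bits n| = 2^n),
   the basis vector |b> being the enum_rank b -th standard basis vector. *)
Definition bits (n : nat) := {ffun 'I_n -> bool}.
Definition dimH (n : nat) := #|{: bits n}|.

Definition costop (n : nat) (c : bits n -> R) : 'M[C]_(dimH n) :=
  diag_mx (\row_(i < dimH n) (c (enum_val i))%:C).

Definition projS (n : nat) (S : {set bits n}) : 'M[C]_(dimH n) :=
  diag_mx (\row_(i < dimH n) (((enum_val i) \in S)%:R : C)).

Definition Malpha (N l : nat) (U : 'I_l -> 'M[C]_N) (alpha : 'cV[C]_l)
  : 'M[C]_N := \sum_(j < l) alpha j 0 *: U j.

Definition braket (N : nat) (u : 'cV[C]_N) (A : 'M[C]_N) (v : 'cV[C]_N) : C :=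
  (dag u *m A *m v) 0 0.

Definition gram (N l : nat) (U : 'I_l -> 'M[C]_N) (iota : 'cV[C]_N)
  (A : 'M[C]_N) : 'M[C]_l :=
  \matrix_(j < l, k < l) braket iota (dag (U j) *m A *m U k) iota.

Definition realify (l : nat) (X : 'M[C]_l) : 'M[R]_(l + l) :=
  block_mx (map_mx (@complex.Re R) X) (- map_mx (@complex.Im R) X)
           (map_mx (@complex.Im R) X) (map_mx (@complex.Re R) X).

Definition embed (k N : nat) : 'M[R]_(N, k) :=
  \matrix_(i < N, j < k) ((val i == val j)%:R).

Definition ulblock (k N : nat) (A : 'M[R]_N) : 'M[R]_k :=
  (embed k N)^T *m A *m embed k N.

Definition pad (k N : nat) (x : 'cV[R]_k) : 'cV[R]_N := embed k N *m x.

Definition gen_eigenvalue (k : nat) (H F : 'M[R]_k) (lambda : R) : Prop :=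
  exists2 x : 'cV[R]_k, x != 0 & H *m x = lambda *: (F *m x).

End Defs.

From HB Require Import structures.
From mathcomp Require Import all_boot all_order all_algebra.
From mathcomp Require Import complex.
From mathcomp Require Import sesquilinear spectral ring.
Import Order.TTheory GRing.Theory Num.Theory.
Local Open Scope ring_scope.
Local Open Scope complex_scope.

Set Implicit Arguments. Unset Strict Implicit. Unset Printing Implicit Defensive.

(* Writing alpha = a + i b and y = (a, b), every form <iota| M_alpha^dag A M_alpha |iota>
   with A Hermitian equals y^T (realify (gram A)) y, so (P) becomes: minimize y^T H y
   subject to y^T F y = 1 and y^T G y = 0, where F is positive definite (the U_j |iota>
   are independent) and G positive semidefinite (1 - P_S is a projection).  In the
   coordinates z = B_G y the form y^T G y is a sum of nonnegative multiples of the z_i^2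
   which vanish exactly for i < m, so the feasible y are the lifts B_G^T (x, 0) of the
   x with x^T Ft x = 1, and the objective becomes x^T Ht x.  Diagonalizing Ft to the
   identity and then Ht (spectral theorem over R[i]) yields a generalized eigenvalue mu
   with mu x^T Ft x <= x^T Ht x; as lambda0 <= mu, lambda0 is the minimum, attained
   at x0. *)

Local Notation hquad w X := (braket w X w).

Section Adjoint.
Variable R : rcfType.
Local Notation C := R[i].

Lemma conjCE (x : C) : Num.conj x = x^*%C.
Proof.
have := complexRe x; rewrite ReJ_add ReE => /(mulIf _) h.
by apply: (addrI x); apply: h; rewrite invr_eq0 pnatr_eq0.
Qed.

Lemma dagE m n (A : 'M[C]_(m, n)) : dag A = A^t*%sesqui.
Proof. by rewrite /dag map_trmx; apply/matrixP=> i j; rewrite !mxE; exact/esym/conjCE. Qed.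

Lemma dagM m n p (A : 'M[C]_(m, n)) (B : 'M[C]_(n, p)) :
  dag (A *m B) = dag B *m dag A.
Proof. by rewrite /dag map_mxM trmx_mul. Qed.

Lemma dagK m n (A : 'M[C]_(m, n)) : dag (dag A) = A.
Proof. by apply/matrixP=> i j; rewrite !mxE conjcK. Qed.

Lemma dagD m n (A B : 'M[C]_(m, n)) : dag (A + B) = dag A + dag B.
Proof. by apply/matrixP=> i j; rewrite !mxE rmorphD. Qed.

Lemma dagN m n (A : 'M[C]_(m, n)) : dag (- A) = - dag A.
Proof. by apply/matrixP=> i j; rewrite !mxE rmorphN. Qed.

Lemma dagZ m n a (A : 'M[C]_(m, n)) : dag (a *: A) = a^*%C *: dag A.
Proof. by apply/matrixP=> i j; rewrite !mxE rmorphM. Qed.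

Lemma dag1 n : dag (1%:M : 'M[C]_n) = 1%:M.
Proof. by apply/matrixP=> i j; rewrite !mxE conjc_nat eq_sym. Qed.

Lemma dag_sum m n I (r : seq I) (P : pred I) (F : I -> 'M[C]_(m, n)) :
  dag (\sum_(i <- r | P i) F i) = \sum_(i <- r | P i) dag (F i).
Proof. by apply: (big_morph _ (@dagD m n)); apply/matrixP=> i j; rewrite !mxE conjc0. Qed.

Lemma dag_diag n (d : 'rV[R]_n) :
  dag (diag_mx (map_mx (real_complex R) d)) = diag_mx (map_mx (real_complex R) d).
Proof.
apply/matrixP => i j; rewrite !mxE; case: (eqVneq i j) => [->|_].
  by rewrite !mulr1n conjc_real.
by rewrite !mulr0n conjc0.
Qed.

Lemma hquadE n (w : 'cV[C]_n) X :
  hquad w X = \sum_j \sum_k (w j 0)^*%C * X j k * w k 0.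
Proof.
rewrite /braket mxE exchange_big; apply: eq_bigr => k _; rewrite mxE big_distrl.
by apply: eq_bigr => j _; rewrite !mxE.
Qed.

Lemma hquadM n p (M : 'M[C]_(n, p)) (u : 'cV[C]_p) X :
  hquad (M *m u) X = hquad u (dag M *m X *m M).
Proof. by rewrite /braket dagM !mulmxA. Qed.

Lemma hquad_conj n (w : 'cV[C]_n) X : (hquad w X)^*%C = hquad w (dag X).
Proof.
rewrite /braket.
have -> : ((dag w *m X *m w) 0 0)^*%C = dag (dag w *m X *m w) 0 0 by rewrite !mxE.
by rewrite !dagM dagK mulmxA.
Qed.

Lemma hquad_herm n (w : 'cV[C]_n) X : dag X = X -> hquad w X = (complex.Re (hquad w X))%:C.
Proof.
move=> hX; have := hquad_conj w X; rewrite hX.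
case: (hquad w X) => a b /= [] /eqP; rewrite eq_sym -subr_eq0 opprK -mulr2n.
by rewrite mulrn_eq0 /= => /eqP ->.
Qed.

Lemma hquad_diag n (v : 'cV[C]_n) (d : 'rV[C]_n) :
  hquad v (diag_mx d) = \sum_i (v i 0)^*%C * d 0 i * v i 0.
Proof.
rewrite hquadE; apply: eq_bigr => j _; rewrite (bigD1 j) //= big1 ?addr0.
  by rewrite !mxE eqxx mulr1n.
by move=> k /negbTE hk; rewrite !mxE eq_sym hk /= mulr0n mulr0 mul0r.
Qed.

Lemma hquad1E n (w : 'cV[C]_n) : hquad w 1%:M = \sum_i (w i 0)^*%C * w i 0.
Proof. by rewrite /braket mulmx1 mxE; apply: eq_bigr => i _; rewrite !mxE. Qed.

Lemma normc2_ge0 (x : C) : 0 <= x^*%C * x.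
Proof. by rewrite mulrC mulcJ_ge0. Qed.

Lemma hquad1_ge0 n (w : 'cV[C]_n) : 0 <= hquad w 1%:M.
Proof. by rewrite hquad1E sumr_ge0 // => i _; exact: normc2_ge0. Qed.

Lemma hquad1_gt0 n (w : 'cV[C]_n) : w != 0 -> 0 < hquad w 1%:M.
Proof.
move=> wn0; rewrite lt_def hquad1_ge0 andbT; apply: contra wn0; rewrite hquad1E.
move=> /eqP/psumr_eq0P w0; apply/eqP/matrixP => i j; rewrite ord1 mxE.
have /eqP := w0 (fun i _ => normc2_ge0 (w i 0)) i isT.
by rewrite mulf_eq0 conjc_eq0 orbb => /eqP.
Qed.

End Adjoint.

Section Realification.
Variable R : rcfType.
Local Notation C := R[i].
Local Notation toC := (real_complex R).
Local Notation mRe := (map_mx (@complex.Re R)).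
Local Notation mIm := (map_mx (@complex.Im R)).

Definition quad n (y : 'cV[R]_n) (M : 'M[R]_n) : R := (y^T *m M *m y) 0 0.

Definition cplx l (y : 'cV[R]_(l + l)) : 'cV[C]_l :=
  \col_(j < l) ((y (lshift l j) 0) +i* (y (rshift l j) 0)).

Lemma quadE n (y : 'cV[R]_n) M :
  quad y M = \sum_j \sum_k y j 0 * M j k * y k 0.
Proof.
rewrite /quad mxE exchange_big; apply: eq_bigr => k _; rewrite mxE big_distrl.
by apply: eq_bigr => j _; rewrite !mxE.
Qed.

Lemma quad0 n (M : 'M[R]_n) : quad 0 M = 0.
Proof. by rewrite /quad mulmx0 mxE. Qed.

Lemma quad_mulmx n p (E : 'M[R]_(n, p)) x M : quad (E *m x) M = quad x (E^T *m M *m E).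
Proof. by rewrite /quad trmx_mul !mulmxA. Qed.

Lemma cplx_realvec l (u : 'cV[C]_l) : cplx (col_mx (mRe u) (mIm u)) = u.
Proof.
apply/matrixP => i j; rewrite ord1 mxE col_mxEu col_mxEd !mxE.
by case: (u i 0).
Qed.

Lemma Re_Im_eq0 n (u : 'cV[C]_n) : mRe u = 0 -> mIm u = 0 -> u = 0.
Proof.
move=> /matrixP Re0 /matrixP Im0; apply/matrixP => i j; have := Re0 i j; have := Im0 i j.
by rewrite !mxE; case: (u i j) => a b /= -> ->.
Qed.

Lemma mapC_mulmx_Re_Im n (M : 'M[R]_n) (z : 'cV[C]_n) :
  mRe (map_mx toC M *m z) = M *m mRe z /\ mIm (map_mx toC M *m z) = M *m mIm z.
Proof.
split; apply/matrixP => i j; rewrite !mxE raddf_sum; apply: eq_bigr => k _;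
  by rewrite !mxE; case: (z k j) => a b /=; ring.
Qed.

Lemma scale_Re_Im n (c : R) (z : 'cV[C]_n) :
  mRe (c%:C *: z) = c *: mRe z /\ mIm (c%:C *: z) = c *: mIm z.
Proof. by split; apply/matrixP => i j; rewrite !mxE; case: (z i j) => a b /=; ring. Qed.

Lemma cplx_eq0 l (y : 'cV[R]_(l + l)) : cplx y = 0 -> y = 0.
Proof.
move=> y0; rewrite -[y]vsubmxK -col_mx0; congr col_mx; apply/matrixP => i j;
  have := congr1 (fun u : 'cV[C]_l => u i 0) y0; rewrite ord1 !mxE; by case.
Qed.

Lemma sum2_split_ord l (F : 'I_(l + l) -> 'I_(l + l) -> R) :
  \sum_i \sum_j F i j = \sum_(i < l) \sum_(j < l)
    (F (lshift l i) (lshift l j) + F (lshift l i) (rshift l j) +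
     F (rshift l i) (lshift l j) + F (rshift l i) (rshift l j)).
Proof.
rewrite big_split_ord /=; under [RHS]eq_bigr => i _ do rewrite !big_split.
under eq_bigr => i _ do rewrite big_split_ord.
under [X in _ + X]eq_bigr => i _ do rewrite big_split_ord.
by rewrite !big_split !addrA.
Qed.

Lemma Re_hquad_cplx l (X : 'M[C]_l) (y : 'cV[R]_(l + l)) :
  complex.Re (hquad (cplx y) X) = quad y (realify X).
Proof.
rewrite hquadE quadE sum2_split_ord raddf_sum; apply: eq_bigr => j _.
rewrite raddf_sum; apply: eq_bigr => k _.
rewrite /realify !block_mxEul !block_mxEur !block_mxEdl !block_mxEdr !mxE.
by case: (X j k) => a b /=; ring.
Qed.

Lemma hquad_cplx l (X : 'M[C]_l) (y : 'cV[R]_(l + l)) :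
  dag X = X -> hquad (cplx y) X = (quad y (realify X))%:C.
Proof. by move=> hX; rewrite hquad_herm // Re_hquad_cplx. Qed.

Lemma realify_sym l (X : 'M[C]_l) : dag X = X -> (realify X)^T = realify X.
Proof.
move=> hX; have hXij i j : X j i = (X i j)^*%C by rewrite -[in LHS]hX !mxE.
have hRe : (mRe X)^T = mRe X.
  by apply/matrixP => i j; rewrite !mxE hXij; case: (X i j).
have hIm : (mIm X)^T = - mIm X.
  by apply/matrixP => i j; rewrite !mxE hXij; case: (X i j).
by rewrite /realify tr_block_mx hRe hIm linearN /= hIm opprK.
Qed.

Lemma dag_mapC n (M : 'M[R]_n) : M^T = M -> dag (map_mx toC M) = map_mx toC M.
Proof. by move=> hM; apply/matrixP => i j; rewrite !mxE -[in RHS]hM mxE; exact: conjc_real. Qed.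

Lemma hquad_mapC n (M : 'M[R]_n) x :
  hquad (map_mx toC x) (map_mx toC M) = (quad x M)%:C.
Proof.
rewrite hquadE quadE rmorph_sum; apply: eq_bigr => j _.
rewrite rmorph_sum; apply: eq_bigr => k _.
by rewrite !mxE !rmorphM; congr (_ * _ * _); exact: conjc_real.
Qed.

Lemma hquad_mapC_split n (M : 'M[R]_n) (u : 'cV[C]_n) : M^T = M ->
  hquad u (map_mx toC M) = (quad (mRe u) M + quad (mIm u) M)%:C.
Proof.
move=> hM; have -> : hquad u (map_mx toC M) =
    hquad (cplx (col_mx (mRe u) (mIm u))) (map_mx toC M) by rewrite cplx_realvec.
rewrite hquad_cplx ?dag_mapC //.
have -> : realify (map_mx toC M) = block_mx M 0 0 M.
  by rewrite /realify; congr block_mx; apply/matrixP => i j; rewrite !mxE ?oppr0.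
by rewrite /quad tr_col_mx mul_row_block mul_row_col !mulmx0 !addr0 add0r mxE.
Qed.

End Realification.

Lemma mulmx_linv_neq0 (K : nzRingType) n (P Q : 'M[K]_n) (x : 'cV[K]_n) :
  P *m Q = 1%:M -> x != 0 -> Q *m x != 0.
Proof. by move=> PQ; apply: contra => /eqP Qx0; rewrite -[x]mul1mx -PQ -mulmxA Qx0 mulmx0. Qed.

Lemma delta_col_neq0 (K : nzRingType) n (i : 'I_n) : (delta_mx i 0 : 'cV[K]_n) != 0.
Proof. by apply/negP => /eqP/matrixP/(_ i 0)/eqP; rewrite !mxE !eqxx oner_eq0. Qed.

Lemma diag_mx_delta (K : nzRingType) n (d : 'rV[K]_n) i :
  diag_mx d *m (delta_mx i 0 : 'cV[K]_n) = d 0 i *: delta_mx i 0.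
Proof.
apply/matrixP => j k; rewrite mul_diag_mx !mxE.
by case: (eqVneq j i) => [->|]; rewrite ?mulr1 ?mulr0 //= andbF mulr0.
Qed.

Section GeneralizedEigen.
Variable R : rcfType.
Local Notation C := R[i].
Local Notation toC := (real_complex R).
Local Notation mRe := (map_mx (@complex.Re R)).
Local Notation mIm := (map_mx (@complex.Im R)).

Lemma herm_spectral n (M : 'M[C]_n) : dag M = M ->
  exists (P : 'M[C]_n) (r : 'rV[R]_n),
    [/\ dag P *m P = 1%:M, P *m dag P = 1%:M &
        M = dag P *m diag_mx (map_mx toC r) *m P].
Proof.
move=> hM; have M_herm : M \is hermsymmx.
  by apply/is_hermitianmxP; rewrite expr0 scale1r -dagE hM.
have /hermitian_normalmx/orthomx_spectralP M_spec := M_herm.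
have P_unitary := spectral_unitarymx M.
have /mxOverP d_real := hermitian_spectral_diag_real M_herm.
exists (spectralmx M), (mRe (spectral_diag M)); split.
- by rewrite dagE -invmx_unitary // mulVmx // spectral_unit.
- by rewrite dagE; apply/unitarymxP.
have -> : map_mx toC (mRe (spectral_diag M)) = spectral_diag M.
  by apply/matrixP => i j; rewrite !mxE RRe_real.
by rewrite dagE -invmx_unitary.
Qed.

Lemma hquad_delta n (d : 'rV[C]_n) i : hquad (delta_mx i 0) (diag_mx d) = d 0 i.
Proof.
rewrite hquad_diag (bigD1 i) //= big1 ?addr0 => [|j /negbTE ji]; last first.
  by rewrite !mxE ji mulr0.
by rewrite !mxE !eqxx conjc_nat mulr1 mul1r.
Qed.

Lemma herm_pd_congr1 k (B : 'M[C]_k) : dag B = B ->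
  (forall u, u != 0 -> 0 < hquad u B) ->
  exists T Ti : 'M[C]_k,
    [/\ T *m Ti = 1%:M, Ti *m T = 1%:M & dag T *m B *m T = 1%:M].
Proof.
move=> hB B_pd; have [P [r [P1 P2 hBd]]] := herm_spectral hB.
have r_gt0 i : 0 < r 0 i.
  have := B_pd _ (mulmx_linv_neq0 P2 (delta_col_neq0 _ i)).
  rewrite hquadM dagK hBd !mulmxA P2 mul1mx -mulmxA P2 mulmx1 hquad_delta.
  by rewrite mxE ltcR.
pose s := \row_i Num.sqrt (r 0 i); pose sV := \row_i (Num.sqrt (r 0 i))^-1.
have s_neq0 i : Num.sqrt (r 0 i) != 0 by rewrite gt_eqF // sqrtr_gt0.
exists (dag P *m diag_mx (map_mx toC sV)), (diag_mx (map_mx toC s) *m P); split.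
- rewrite -mulmxA (mulmxA (diag_mx _)) mulmx_diag.
  rewrite (_ : \row_j _ = const_mx 1) ?diag_const_mx ?mul1mx //.
  by apply/matrixP => i j; rewrite !mxE -rmorphM mulVf.
- rewrite mulmxA -(mulmxA _ P) P2 mulmx1 mulmx_diag.
  rewrite (_ : \row_j _ = const_mx 1) ?diag_const_mx //.
  by apply/matrixP => i j; rewrite !mxE -rmorphM mulfV.
rewrite dagM dagK dag_diag hBd !mulmxA -!(mulmxA _ P) P2 !mulmx1 !mulmx_diag.
rewrite (_ : \row_j _ = const_mx 1) ?diag_const_mx //.
apply/matrixP => i j; rewrite !mxE -!rmorphM.
rewrite -[X in _ * X * _](sqr_sqrtr (ltW (r_gt0 j))) expr2 mulrA.
by rewrite mulVf // mul1r mulfV // rmorph1.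
Qed.

Lemma herm_min_eigen k (A : 'M[C]_k) : (0 < k)%N -> dag A = A ->
  exists mu : R, (exists2 w : 'cV[C]_k, w != 0 & A *m w = mu%:C *: w) /\
    forall v, mu%:C * hquad v 1%:M <= hquad v A.
Proof.
move=> k_gt0 hA; have [Q [r [Q1 Q2 hAd]]] := herm_spectral hA.
have [i0 _ r_min] := arg_minP (fun i => r 0 i) (isT : predT (Ordinal k_gt0)).
exists (r 0 i0); split.
  exists (dag Q *m delta_mx i0 0); first exact: mulmx_linv_neq0 Q2 (delta_col_neq0 _ _).
  by rewrite hAd -!mulmxA (mulmxA Q) Q2 mul1mx diag_mx_delta mxE scalemxAr.
move=> v; have -> : v = dag Q *m (Q *m v) by rewrite mulmxA Q1 mul1mx.
rewrite !(hquadM (dag Q)) dagK hAd mulmx1 Q2 !mulmxA Q2 mul1mx -mulmxA Q2 mulmx1.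
rewrite hquad_diag hquad1E mulr_sumr; apply: ler_sum => i _.
rewrite mxE mulrAC [X in _ <= X]mulrC ler_wpM2r ?normc2_ge0 // mxE lecR.
exact: r_min.
Qed.

Lemma herm_gen_eigen k (A B : 'M[C]_k) : (0 < k)%N -> dag A = A -> dag B = B ->
  (forall u, u != 0 -> 0 < hquad u B) ->
  exists mu : R, (exists2 z : 'cV[C]_k, z != 0 & A *m z = mu%:C *: (B *m z)) /\
    forall u, mu%:C * hquad u B <= hquad u A.
Proof.
move=> k_gt0 hA hB B_pd; have [T [Ti [TTi TiT TBT]]] := herm_pd_congr1 hB B_pd.
have hA' : dag (dag T *m A *m T) = dag T *m A *m T by rewrite !dagM dagK hA mulmxA.
have [mu [[w wn0 Aw] mu_min]] := herm_min_eigen k_gt0 hA'.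
have TiT_dag : dag Ti *m dag T = 1%:M by rewrite -dagM TTi dag1.
exists mu; split.
  exists (T *m w); first exact: mulmx_linv_neq0 TiT wn0.
  (* T^dag B T = 1 gives B T = Ti^dag, so A T w = Ti^dag (T^dag A T) w = mu B T w. *)
  have BT : B *m T = dag Ti.
    by rewrite -[LHS]mul1mx -TiT_dag -mulmxA (mulmxA (dag T)) TBT mulmx1.
  by rewrite [B *m _]mulmxA BT scalemxAr -Aw !mulmxA TiT_dag mul1mx -mulmxA.
move=> u; have -> : u = T *m (Ti *m u) by rewrite mulmxA TTi mul1mx.
by rewrite !(hquadM T) TBT; exact: mu_min.
Qed.

Lemma sym_gen_eigen k (A B : 'M[R]_k) : (0 < k)%N -> A^T = A -> B^T = B ->
  (forall x, x != 0 -> 0 < quad x B) ->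
  exists mu, gen_eigenvalue A B mu /\ forall x, mu * quad x B <= quad x A.
Proof.
move=> k_gt0 hA hB B_pd.
have B_psd x : 0 <= quad x B by have [->|/B_pd/ltW] := eqVneq x 0; rewrite ?quad0.
have Bc_pd u : u != 0 -> 0 < hquad u (map_mx toC B).
  move=> un0; rewrite hquad_mapC_split // ltcR.
  have [Re0|ReN0] := eqVneq (mRe u) 0; last by rewrite ltr_wpDr ?B_pd.
  rewrite Re0 quad0 add0r B_pd //; apply: contra un0 => /eqP Im0.
  by rewrite (Re_Im_eq0 Re0 Im0).
have [mu [[z zn0 Az] mu_min]] :=
  herm_gen_eigen k_gt0 (dag_mapC hA) (dag_mapC hB) Bc_pd.
exists mu; split; last first.
  by move=> x; have := mu_min (map_mx toC x); rewrite !hquad_mapC -rmorphM lecR.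
have [ReA ImA] := mapC_mulmx_Re_Im A z.
have [ReB ImB] := mapC_mulmx_Re_Im B z.
have [ReS ImS] := scale_Re_Im mu (map_mx toC B *m z).
have [Re0|ReN0] := eqVneq (mRe z) 0.
  exists (mIm z); last by rewrite -ImA Az ImS ImB.
  by apply: contra zn0 => /eqP Im0; rewrite (Re_Im_eq0 Re0 Im0).
by exists (mRe z); last by rewrite -ReA Az ReS ReB.
Qed.

End GeneralizedEigen.

Section Observables.
Variables (R : rcfType) (n : nat).
Local Notation toC := (real_complex R).

Lemma costop_herm (c : bits n -> R) : dag (costop c) = costop c.
Proof.
have -> : costop c = diag_mx (map_mx toC (\row_i c (enum_val i))).
  by rewrite /costop; congr diag_mx; apply/matrixP => i j; rewrite !mxE.
exact: dag_diag.
Qed.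

Lemma projS_herm (S : {set bits n}) : dag (projS R S) = projS R S.
Proof.
have -> : projS R S = diag_mx (map_mx toC (\row_i ((enum_val i \in S)%:R : R))).
  by rewrite /projS; congr diag_mx; apply/matrixP => i j; rewrite !mxE rmorph_nat.
exact: dag_diag.
Qed.

Lemma projS_idem (S : {set bits n}) : projS R S *m projS R S = projS R S.
Proof.
rewrite /projS mulmx_diag; congr diag_mx; apply/matrixP => i j; rewrite !mxE.
by case: (_ \in _); rewrite ?mulr1 ?mulr0.
Qed.

Lemma compl_projS_dagK (S : {set bits n}) :
  dag (1%:M - projS R S) *m (1%:M - projS R S) = 1%:M - projS R S.
Proof.
rewrite dagD dagN dag1 projS_herm mulmxBl mulmxBr !mul1mx mulmxBr mulmx1.
by rewrite projS_idem subrr subr0.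
Qed.

End Observables.

Section Gram.
Variable R : rcfType.
Local Notation C := R[i].
Variables (N l : nat) (U : 'I_l -> 'M[C]_N) (iota : 'cV[C]_N).

Lemma Malpha_hquad alpha A :
  hquad iota (dag (Malpha U alpha) *m A *m Malpha U alpha) = hquad alpha (gram U iota A).
Proof.
have -> : dag (Malpha U alpha) *m A *m Malpha U alpha =
    \sum_j \sum_k ((alpha j 0)^*%C * alpha k 0) *: (dag (U j) *m A *m U k).
  rewrite /Malpha dag_sum !mulmx_suml; apply: eq_bigr => j _.
  rewrite dagZ -scalemxAl mulmx_sumr; apply: eq_bigr => k _.
  by rewrite -!scalemxAl -scalemxAr scalerA.
rewrite [RHS]hquadE /braket mulmx_sumr mulmx_suml summxE; apply: eq_bigr => j _.
rewrite mulmx_sumr mulmx_suml summxE; apply: eq_bigr => k _.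
by rewrite -scalemxAr -scalemxAl [LHS]mxE [in RHS]mxE mulrAC /braket mulmxA.
Qed.

Lemma gram_herm A : dag A = A -> dag (gram U iota A) = gram U iota A.
Proof.
move=> hA; apply/matrixP => j k; rewrite !mxE hquad_conj.
by rewrite !dagM dagK hA mulmxA.
Qed.

Lemma hquad_Malpha_cplx A y : dag A = A ->
  hquad iota (dag (Malpha U (cplx y)) *m A *m Malpha U (cplx y)) =
  (quad y (realify (gram U iota A)))%:C.
Proof. by move=> hA; rewrite Malpha_hquad hquad_cplx // gram_herm. Qed.

Lemma Malpha_iota alpha :
  (Malpha U alpha *m iota)^T = alpha^T *m \matrix_(j < l) (U j *m iota)^T.
Proof.
apply/matrixP => i j; rewrite ord1 [LHS]mxE /Malpha mulmx_suml summxE [RHS]mxE.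
by apply: eq_bigr => k _; rewrite -scalemxAl !mxE.
Qed.

Lemma Re_hquad_Malpha y A :
  quad y (realify (gram U iota A)) = complex.Re (hquad (Malpha U (cplx y) *m iota) A).
Proof. by rewrite -Re_hquad_cplx -Malpha_hquad hquadM. Qed.

Lemma realify_gram_psd (K : 'M[C]_N) y : 0 <= quad y (realify (gram U iota (dag K *m K))).
Proof.
have -> : dag K *m K = dag K *m 1%:M *m K by rewrite mulmx1.
rewrite Re_hquad_Malpha -hquadM.
by have := hquad1_ge0 (K *m (Malpha U (cplx y) *m iota)); rewrite lecE => /andP[].
Qed.

Lemma realify_gram1_pd : row_free (\matrix_(j < l) (U j *m iota)^T) ->
  forall y, y != 0 -> 0 < quad y (realify (gram U iota 1%:M)).
Proof.
move=> U_free y yn0; rewrite Re_hquad_Malpha.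
suff /hquad1_gt0 : Malpha U (cplx y) *m iota != 0 by rewrite ltcE => /andP[].
apply: contra yn0 => /eqP Miota0; apply/eqP/cplx_eq0/trmx_inj.
by apply: (row_free_inj U_free); rewrite /= -Malpha_iota Miota0 !trmx0 mul0mx.
Qed.

End Gram.

Section RealForms.
Variable R : rcfType.

Lemma embedTE k n : (k <= n)%N -> (embed R k n)^T *m embed R k n = 1%:M.
Proof.
move=> le_kn; apply/matrixP => i j; rewrite !mxE (bigD1 (widen_ord le_kn i)) //=.
rewrite big1 ?addr0 => [|a ai]; first by rewrite !mxE eqxx mul1r.
rewrite !mxE; have [a_i|] := eqVneq (val a) (val i); last by rewrite mul0r.
by move: ai; rewrite (_ : a = widen_ord le_kn i) ?eqxx //; apply: val_inj.
Qed.

Lemma pad_ge k n (x : 'cV[R]_k) (i : 'I_n) : (k <= i)%N -> pad n x i 0 = 0.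
Proof.
move=> le_ki; rewrite !mxE big1 // => j _; rewrite !mxE.
by rewrite gtn_eqF ?mul0r // (leq_trans (ltn_ord j) le_ki).
Qed.

Lemma pad_embedT k n (z : 'cV[R]_n) : (k <= n)%N ->
  (forall i : 'I_n, (k <= i)%N -> z i 0 = 0) -> pad n ((embed R k n)^T *m z) = z.
Proof.
move=> le_kn z_supp; apply/matrixP => i j; rewrite ord1.
have [le_ki|lt_ik] := leqP k i; first by rewrite pad_ge // z_supp.
rewrite mxE (bigD1 (Ordinal lt_ik)) //= big1 ?addr0 => [|a ai]; last first.
  rewrite !mxE; have [ia|] := eqVneq (val i) (val a); last by rewrite mul0r.
  by move: ai; rewrite (_ : a = Ordinal lt_ik) ?eqxx //; apply: val_inj.
rewrite !mxE /= eqxx mul1r (bigD1 i) //= big1 ?addr0 => [|a ai].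
  by rewrite !mxE /= eqxx mul1r.
by rewrite !mxE /= (negbTE (ai : val a != val i)) mul0r.
Qed.

Lemma orthogonal_invmx n (B : 'M[R]_n) : orthogonal_mx B -> invmx B = B^T.
Proof.
move=> [BTB BBT]; have [B_unit _] := mulmx1_unit BBT.
by rewrite -[invmx B]mul1mx -BTB -mulmxA mulmxV // mulmx1.
Qed.

Lemma quad_orth n (B : 'M[R]_n) y M : B^T *m B = 1%:M ->
  quad (B *m y) (B *m M *m B^T) = quad y M.
Proof. by move=> BTB; rewrite quad_mulmx !mulmxA BTB mul1mx -mulmxA BTB mulmx1. Qed.

Lemma quad_diag n (D : 'M[R]_n) z : is_diag_mx D ->
  quad z D = \sum_i D i i * z i 0 ^+ 2.
Proof.
move=> /is_diag_mxP D_diag; rewrite quadE; apply: eq_bigr => i _.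
rewrite (bigD1 i) //= big1 ?addr0 => [|j ji]; first by rewrite mulrAC mulrC expr2 mulrA.
by rewrite D_diag ?mulr0 ?mul0r // eq_sym.
Qed.

Lemma ulblock_sym k n (M : 'M[R]_n) : M^T = M -> (ulblock k M)^T = ulblock k M.
Proof. by move=> M_sym; rewrite /ulblock !trmx_mul trmxK M_sym mulmxA. Qed.

Lemma quad_ulblock k n (M : 'M[R]_n) x : quad x (ulblock k M) = quad (pad n x) M.
Proof. by rewrite /pad quad_mulmx. Qed.

End RealForms.

Section ReducedProblem.
Variable R : rcfType.
Variables (N m : nat) (F G H B : 'M[R]_N) (lambda0 : R) (x0 : 'cV[R]_m).
Hypotheses (m_le : (m <= N)%N) (F_sym : F^T = F) (H_sym : H^T = H).
Hypotheses (F_pd : forall y, y != 0 -> 0 < quad y F) (G_psd : forall y, 0 <= quad y G).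
Hypotheses (BTB : B^T *m B = 1%:M) (BBT : B *m B^T = 1%:M).
Hypothesis D_diag : is_diag_mx (B *m G *m B^T).
Hypothesis D_zero : forall i : 'I_N, ((B *m G *m B^T) i i == 0) = (i < m)%N.
Let Ft := ulblock m (B *m F *m B^T).
Let Ht := ulblock m (B *m H *m B^T).
Hypothesis lambda0_eig : gen_eigenvalue Ht Ft lambda0.
Hypothesis lambda0_min : forall lambda, gen_eigenvalue Ht Ft lambda -> lambda0 <= lambda.
Hypotheses (x0_eig : Ht *m x0 = lambda0 *: (Ft *m x0)) (x0_norm : quad x0 Ft = 1).

Local Notation lift x := (B^T *m pad N x).

Lemma quad_conj_ulblock M x : quad x (ulblock m (B *m M *m B^T)) = quad (lift x) M.
Proof.
by rewrite quad_ulblock -{1}[pad N x]mul1mx -BBT -mulmxA quad_orth.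
Qed.

Lemma quad_G_diag y : quad y G = \sum_i (B *m G *m B^T) i i * (B *m y) i 0 ^+ 2.
Proof. by rewrite -(quad_orth y G BTB) quad_diag. Qed.

Lemma D_ge0 i : 0 <= (B *m G *m B^T) i i.
Proof.
have := G_psd (B^T *m (delta_mx i 0 : 'cV[R]_N)); rewrite quad_G_diag mulmxA BBT mul1mx.
rewrite (bigD1 i) //= big1 ?addr0 => [|j ji]; first by rewrite !mxE !eqxx expr1n mulr1.
by rewrite !mxE (negbTE ji) expr0n mulr0.
Qed.

Lemma quad_G_lift (x : 'cV[R]_m) : quad (lift x) G = 0.
Proof.
rewrite quad_G_diag mulmxA BBT mul1mx big1 // => i _.
have [lt_im|le_mi] := ltnP i m; last by rewrite pad_ge // expr0n mulr0.
have /eqP -> : (B *m G *m B^T) i i == 0 by rewrite D_zero.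
by rewrite mul0r.
Qed.

Lemma G_null_lift y : quad y G = 0 -> y = lift ((embed R m N)^T *m (B *m y)).
Proof.
move=> yG0; rewrite pad_embedT // ?mulmxA ?BTB ?mul1mx // => i le_mi.
have D_sq_ge0 j : predT j -> 0 <= (B *m G *m B^T) j j * (B *m y) j 0 ^+ 2.
  by move=> _; rewrite mulr_ge0 ?D_ge0 ?sqr_ge0.
have /eqP := psumr_eq0P D_sq_ge0 (etrans (esym (quad_G_diag y)) yG0) (isT : predT i).
by rewrite mulf_eq0 sqrf_eq0 D_zero ltnNge le_mi /= => /eqP.
Qed.

Lemma Ft_pd x : x != 0 -> 0 < quad x Ft.
Proof.
move=> xn0; rewrite quad_conj_ulblock; apply: F_pd; apply: contra xn0 => /eqP lift0.
apply/eqP; rewrite -[x]mul1mx -(embedTE R m_le) -mulmxA -/(pad N x).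
by rewrite -[pad N x]mul1mx -BBT -mulmxA lift0 !mulmx0.
Qed.

Lemma lambda0_le_rayleigh x : lambda0 * quad x Ft <= quad x Ht.
Proof.
have m_gt0 : (0 < m)%N.
  case: lambda0_eig => x1 + _; rewrite lt0n; apply: contra => /eqP m0.
  by apply/eqP/matrixP => i; have := ltn_ord i; rewrite {2}m0 ltn0.
have Ft_sym : Ft^T = Ft by rewrite ulblock_sym // !trmx_mul trmxK F_sym mulmxA.
have Ht_sym : Ht^T = Ht by rewrite ulblock_sym // !trmx_mul trmxK H_sym mulmxA.
have [mu [mu_eig mu_le]] := sym_gen_eigen m_gt0 Ht_sym Ft_sym Ft_pd.
apply: le_trans (mu_le x); rewrite ler_wpM2r ?lambda0_min //.
by have [->|/Ft_pd/ltW] := eqVneq x 0; rewrite ?quad0.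
Qed.

Theorem reduced_min :
  [/\ quad (lift x0) F = 1, quad (lift x0) G = 0, quad (lift x0) H = lambda0 &
      forall y, quad y F = 1 -> quad y G = 0 -> lambda0 <= quad y H].
Proof.
split; rewrite ?quad_G_lift -?quad_conj_ulblock //.
  by rewrite -/Ht /quad -mulmxA x0_eig -scalemxAr mxE mulmxA -/(quad x0 Ft) x0_norm mulr1.
move=> y yF /G_null_lift y_lift; rewrite y_lift -!quad_conj_ulblock in yF *.
by have := lambda0_le_rayleigh ((embed R m N)^T *m (B *m y)); rewrite yF mulr1.
Qed.

End ReducedProblem.

Unset Implicit Arguments. Set Strict Implicit. Set Printing Implicit Defensive.

Theorem theorem1 (R : rcfType) (n : nat) (c : bits n -> R) (S : {set bits n})
  (iota : 'cV[R[i]]_(dimH n)) (l : nat) (U : 'I_l -> 'M[R[i]]_(dimH n))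
  (BG : 'M[R]_(l + l)) (lambda0 : R) (x0 : 'cV[R]_(\rank (kermx (realify (gram U iota (1%:M - projS R S)))))) :
  (* |iota> in H_S, unit vector *)
  (forall i : 'I_(dimH n), enum_val i \notin S -> iota i 0 = 0) ->
  braket iota 1%:M iota = 1 ->
  (* U_1, ..., U_l unitary with U_l = 1 *)
  (0 < l)%N ->
  (forall j, unitary_mx (U j)) ->
  (forall j : 'I_l, val j = l.-1 -> U j = 1%:M) ->
  (* {U_j |iota>} linearly independent *)
  row_free (\matrix_(j < l) (U j *m iota)^T) ->
  let Cop := costop c in
  let PS := projS R S in
  let F := realify (gram U iota 1%:M) in
  let G := realify (gram U iota (1%:M - PS)) in
  let H := realify (gram U iota Cop) in
  let m := \rank (kermx G) in
  (* B_G orthogonal, B_G G B_G^{-1} diagonal, first m entries 0, others nonzero *)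
  orthogonal_mx BG ->
  is_diag_mx (BG *m G *m invmx BG) ->
  (forall i : 'I_(l + l), ((BG *m G *m invmx BG) i i == 0) = (val i < m)%N) ->
  let Ft := ulblock m (BG *m F *m invmx BG) in
  let Ht := ulblock m (BG *m H *m invmx BG) in
  (* lambda0 : smallest generalized eigenvalue, x0 a normalized eigenvector *)
  gen_eigenvalue Ht Ft lambda0 ->
  (forall lambda, gen_eigenvalue Ht Ft lambda -> lambda0 <= lambda) ->
  Ht *m x0 = lambda0 *: (Ft *m x0) ->
  (x0^T *m Ft *m x0) 0 0 = 1 ->
  let feasible (alpha : 'cV[R[i]]_l) :=
    braket iota (dag (Malpha U alpha) *m Malpha U alpha) iota = 1 /\
    braket iota (dag (Malpha U alpha) *m (1%:M - PS) *m Malpha U alpha) iota = 0 in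
  let obj (alpha : 'cV[R[i]]_l) :=
    braket iota (dag (Malpha U alpha) *m Cop *m Malpha U alpha) iota in
  let v : 'cV[R]_(l + l) := invmx BG *m pad (l + l) x0 in
  let alpha0 : 'cV[R[i]]_l :=
    \col_(j < l) ((v (lshift l j) 0) +i* (v (rshift l j) 0)) in
  feasible alpha0 /\ obj alpha0 = lambda0%:C /\
  (forall alpha, feasible alpha -> lambda0%:C <= obj alpha).
Proof.
(* The first five hypotheses (iota a unit vector of H_S, the U_j unitary, U_l = 1)
   only make (P) feasible, which the normalized eigenvector x0 already witnesses. *)
move=> _ _ _ _ _ U_free Cop PS F G H m BG_orth.
rewrite (orthogonal_invmx BG_orth) => D_diag D_zero Ft Ht lambda0_eig lambda0_min
  x0_eig x0_norm feasible obj v alpha0.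
have [BTB BBT] := BG_orth.
have herm1 := @dag1 R (dimH n).
have hermG : dag (1%:M - PS) = 1%:M - PS by rewrite dagD dagN dag1 projS_herm.
have hermC : dag Cop = Cop := costop_herm c.
have G_psd y : 0 <= quad y G by rewrite /G -compl_projS_dagK realify_gram_psd.
have [y0F y0G y0H y_min] := @reduced_min R (l + l) m F G H BG lambda0 x0 (rank_leq_col _)
  (realify_sym (gram_herm U iota herm1)) (realify_sym (gram_herm U iota hermC))
  (realify_gram1_pd U_free) G_psd BTB BBT D_diag D_zero
  lambda0_eig lambda0_min x0_eig x0_norm.
have feasibleE y : feasible (cplx y) <-> (quad y F)%:C = 1 /\ (quad y G)%:C = 0.
  rewrite /feasible -{2}[Malpha U (cplx y)]mul1mx mulmxA.
  by rewrite (hquad_Malpha_cplx U iota y herm1) (hquad_Malpha_cplx U iota y hermG).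
have objE y : obj (cplx y) = (quad y H)%:C by rewrite /obj hquad_Malpha_cplx.
split; [|split].
- by apply/feasibleE; split; [exact: congr1 _ y0F | exact: congr1 _ y0G].
- exact: etrans (objE v) (congr1 _ y0H).
move=> alpha; rewrite -(cplx_realvec alpha) objE lecR => /feasibleE[yF yG].
by apply: y_min; apply: complexI; [exact: yF | exact: yG].
Qed.
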